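(* Let $W$ be a binary symmetric channel (equivalently, a symmetric binary-input channel with $S_1=0$ self-symmetric and $S_2=2$ non-self-symmetric output symbols), $N=2^n$, and let $a$ be a power of $2$ with $a\le N/2$. For $i=N-a$, the number $n_c(N,i,0,2)$ of distinct values of $W_N^{(i)}(\mathbf{y})$ as $\mathbf{y}$ ranges over $\mathbb{F}_2^N$ equals $$n_c(N,i,0,2)=\binom{a+\frac{N}{2a}}{\frac{N}{2a}}.$$
   Context: $G_N=F^{\otimes n}$ with $F=\begin{pmatrix}1&0\\1&1\end{pmatrix}$ over $\mathbb{F}_2$; $A(N,i)$ is the submatrix of rows $i+1,\dots,N$ of $G_N$. For a BSC with crossover probability $p$, $W^N(\mathbf{y}|\mathbf{x})=\prod_j W(y_j|x_j)$, and $W_N^{(i)}(\mathbf{y})=\frac{1}{2^{N-1}}\sum_{\mathbf{c}\in\mathrm{row}(A(N,i))}W^N(\mathbf{y}|\mathbf{c})$. *)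

From mathcomp Require Import all_boot all_order all_algebra.
From mathcomp Require Import mxtens.
Set Implicit Arguments. Unset Strict Implicit. Unset Printing Implicit Defensive.
Import Order.TTheory GRing.Theory Num.Theory.
Local Open Scope ring_scope.

Definition Fker : 'M['F_2]_2 := \matrix_(i < 2, j < 2) (if (j <= i)%N then 1 else 0).

Fixpoint Gpolar (n : nat) : 'M['F_2]_(2 ^ n) :=
  match n return 'M['F_2]_(2 ^ n) with
  | 0 => 1%:M
  | n'.+1 => castmx (esym (expnS 2 n'), esym (expnS 2 n')) (Fker *t Gpolar n')
  end.

(* A(N,i): rows i+1,...,N (1-indexed) of G_N, i.e. rows i,...,N-1 (0-indexed). *)
Lemma Asub_idx_proof (N i : nat) (k : 'I_(N - i)) : (i + k < N)%N.
Proof. by case: k => k /= Hk; rewrite -ltn_subRL. Qed.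

Definition Asub_idx (N i : nat) (k : 'I_(N - i)) : 'I_N :=
  Ordinal (Asub_idx_proof k).

Definition Asub (n i : nat) : 'M['F_2]_(2 ^ n - i, 2 ^ n) :=
  \matrix_(k < 2 ^ n - i, j < 2 ^ n) Gpolar n (Asub_idx k) j.

(* BSC transition probability W(y|x) with crossover probability p, where p
   is kept as a formal indeterminate: an element of {poly rat} in 'X = p. *)
Definition Wbsc (y x : 'F_2) : {poly rat} := if y == x then 1 - 'X else 'X.

Definition WN (N : nat) (y c : 'rV['F_2]_N) : {poly rat} :=
  \prod_(j < N) Wbsc (y ord0 j) (c ord0 j).

Definition Wsplit (n i : nat) (y : 'rV['F_2]_(2 ^ n)) : {poly rat} :=
  ((2 ^ (2 ^ n - 1))%:R : rat)^-1 *: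
    \sum_(c : 'rV['F_2]_(2 ^ n) | (c <= Asub n i)%MS) WN y c.

Arguments Wsplit : clear implicits.

Definition nc (n i : nat) : nat :=
  size (undup [seq Wsplit n i y | y <- enum 'rV['F_2]_(2 ^ n)]).

(* The last [a = 2^k] rows of [G_N] are [G_a] (invertible) times the matrix repeating a word of
   length [a], so they span exactly the [a]-periodic words.  Hence [W_N^(i)(y)] factors over the
   [a] residue classes [t] into repetition-code likelihoods [rep_lik m w_t], where [m = N/a] and
   [w_t] is the weight of [y] on class [t].  Each factor is invariant under [w_t -> m - w_t], and
   the substitution [p = q/(1+q)] turns the product into [q^(sum u_t) * prod (1 + q^(m - 2 u_t))]
   up to a constant, from which the multiset of folded weights [u_t = min(w_t, m - w_t)] in
   [0..m/2] is recovered.  So the distinct values correspond to the multisets of size [a] drawn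
   from [0..N/(2a)]. *)

From mathcomp Require Import all_boot all_order all_algebra.
From mathcomp Require Import mxtens zify ring.
Set Implicit Arguments. Unset Strict Implicit. Unset Printing Implicit Defensive.
Import GRing.Theory Num.Theory.
Local Open Scope ring_scope.

Lemma seq_min_exists (s : seq nat) : s != [::] -> exists2 x, x \in s & all (leq x) s.
Proof.
elim: s => [//|y s IH] _.
have [->|/IH [x xs ax]] := eqVneq s [::].
  by exists y; rewrite ?mem_seq1 //= leqnn.
have [yx|xy] := leqP y x.
  exists y; first exact: mem_head.
  by rewrite /= leqnn; apply/allP=> z /(allP ax); apply: leq_trans.
by exists x; rewrite ?in_cons ?xs ?orbT //= ltnW.
Qed.

Section RepetitionLikelihood.

Variable R : numFieldType.
Implicit Types (D E U V : seq nat) (P Q : {poly R}).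

Definition prod_1DXn D : {poly R} := \prod_(d <- D) (1 + 'X^d).

Lemma prod_1DXn_cons d D : prod_1DXn (d :: D) = (1 + 'X^d) * prod_1DXn D.
Proof. by rewrite /prod_1DXn big_cons. Qed.

Lemma coef0_prod_1DXn D : (prod_1DXn D)`_0 = (2 ^ count_mem 0%N D)%:R.
Proof.
elim: D => [|d D IH]; first by rewrite /prod_1DXn big_nil coef1.
rewrite prod_1DXn_cons coef0M IH coefD coef1 coefXn.
by case: d => [|d] /=; rewrite ?add1n ?expnS ?natrM // add0n addr0 mul1r.
Qed.

Lemma coef_prod_1DXn_min D d0 : (0 < d0)%N -> all (leq d0) D ->
  (prod_1DXn D)`_d0 = (count_mem d0 D)%:R.
Proof.
move=> d0_gt0; elim: D => [|d D IH].
  by rewrite /prod_1DXn big_nil coef1; case: d0 d0_gt0.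
case/andP=> d0d D_ge; rewrite prod_1DXn_cons mulrDl mul1r coefD IH // coefXnM /=.
case: ltngtP d0d => // [_|<-] _; first by rewrite addr0.
rewrite subnn coef0_prod_1DXn natrD addrC.
suff -> : count_mem 0%N D = 0%N by [].
by apply/eqP; rewrite -leqn0 leqNgt -has_count; apply/hasPn => x /(allP D_ge) /=; lia.
Qed.

Lemma oneDXn_neq0 d : (1 + 'X^d : {poly R}) != 0.
Proof.
apply/eqP => /(congr1 (horner^~ 1)); rewrite !hornerE expr1n.
by apply/eqP; rewrite paddr_eq0 ?ler01 // oner_eq0.
Qed.

Lemma prod_1DXn_inj D E : prod_1DXn D = prod_1DXn E -> perm_eq D E.
Proof.
have [K D_lt] := ubnP (size D); elim: K D E D_lt => // K IH D E /ltnSE D_le eqDE.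
have [|DE_neq0] := eqVneq (D ++ E) [::].
  by case: D {D_le IH} eqDE => //; case: E.
have [x xDE] := seq_min_exists DE_neq0; rewrite all_cat => /andP[xD_le xE_le].
have cnt_x : count_mem x D = count_mem x E.
  case: x {xDE} xD_le xE_le => [|x] xD_le xE_le.
    by apply/(expnI (ltnSn 1))/eqP; rewrite -(eqr_nat R) -!coef0_prod_1DXn eqDE.
  by apply/eqP; rewrite -(eqr_nat R) -!coef_prod_1DXn_min // eqDE.
have x_cnt : (0 < count_mem x D)%N.
  by move: xDE; rewrite -has_pred1 has_count count_cat -cnt_x addnn double_gt0.
have xD : x \in D by rewrite -has_pred1 has_count.
have xE : x \in E by rewrite -has_pred1 has_count -cnt_x.
have remD := perm_to_rem xD; have remE := perm_to_rem xE.
have eq_rem : prod_1DXn (rem x D) = prod_1DXn (rem x E).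
  apply: (mulfI (oneDXn_neq0 x)); rewrite -!prod_1DXn_cons.
  by rewrite /prod_1DXn -(perm_big _ remD) -(perm_big _ remE).
apply: perm_trans remD _; rewrite perm_sym; apply: perm_trans remE _.
rewrite perm_cons perm_sym IH // size_rem //.
by case: (size D) D_le (leq_trans x_cnt (count_size _ D)).
Qed.

Lemma mulXn_cancel a b P Q :
  P`_0 != 0 -> Q`_0 != 0 -> 'X^a * P = 'X^b * Q -> P = Q.
Proof.
have order_le (x y : nat) (S T : {poly R}) : S`_0 != 0 -> 'X^x * S = 'X^y * T -> (y <= x)%N.
  move=> S0 eqST; rewrite leqNgt; apply/negP => lt_xy; move: S0.
  have := congr1 (coefp x) eqST; rewrite /= !coefXnM ltnn lt_xy subnn => ->.
  by rewrite eqxx.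
move=> P0 Q0 eqPQ; have eq_ab : a = b.
  by apply/eqP; rewrite eqn_leq (order_le _ _ _ _ Q0 (esym eqPQ)) (order_le _ _ _ _ P0 eqPQ).
by move: eqPQ; rewrite eq_ab; apply: mulfI; rewrite expf_neq0 ?polyX_eq0.
Qed.

Lemma poly_natr_eq P Q : (forall i : nat, P.[i%:R] = Q.[i%:R]) -> P = Q.
Proof.
move=> eqPQ; apply/eqP; rewrite -subr_eq0; apply/eqP.
apply: (@roots_geq_poly_eq0 _ _ [seq i%:R | i <- iota 0 (size (P - Q))]).
- by apply/allP=> x /mapP [i _ ->]; rewrite /root hornerD hornerN eqPQ subrr.
- by rewrite map_inj_uniq ?iota_uniq // => i j /eqP; rewrite eqr_nat => /eqP.
- by rewrite size_map size_iota.
Qed.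

(* Likelihood of a block of [m] received bits with [u] ones under the length-[m] repetition code,
   summed over its two codewords; [p] is the indeterminate ['X]. *)
Definition rep_lik m u : {poly R} :=
  (1 - 'X) ^+ (m - u) * 'X ^+ u + 'X ^+ (m - u) * (1 - 'X) ^+ u.

Lemma rep_likC m u : (u <= m)%N -> rep_lik m (m - u) = rep_lik m u.
Proof. by move=> um; rewrite /rep_lik subKn // addrC [X in _ + X]mulrC [X in X + _]mulrC. Qed.

Lemma horner_rep_lik m u (q : R) : (u <= m)%N -> 1 + q != 0 ->
  (rep_lik m u).[q / (1 + q)] = (1 + q)^-1 ^+ m * (q ^+ u + q ^+ (m - u)).
Proof.
move=> um q1; have compl : 1 - q / (1 + q) = (1 + q)^-1 by field.
rewrite /rep_lik !hornerE compl !exprMn -[in _ ^+ m](subnK um) exprD; ring.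
Qed.

Definition fold_weights m U := [seq (m - 2 * u)%N | u <- U].

Lemma horner_prod_rep_lik m U (q : R) : all (fun u => 2 * u <= m)%N U -> 1 + q != 0 ->
  (\prod_(u <- U) rep_lik m u).[q / (1 + q)] =
  (1 + q)^-1 ^+ (m * size U) * ('X^(sumn U) * prod_1DXn (fold_weights m U)).[q].
Proof.
move=> + q1; elim: U => [|u U IH] /=.
  by rewrite /prod_1DXn !big_nil muln0 !hornerE.
case/andP=> um /IH {}IH; rewrite big_cons hornerM IH horner_rep_lik //; last by lia.
have -> : (m - u = u + (m - 2 * u))%N by lia.
rewrite prod_1DXn_cons !(hornerM, hornerD, hornerXn) hornerC mulnS !exprD; ring.
Qed.

Lemma fold_weightsK m U : all (fun u => 2 * u <= m)%N U ->
  map (fun d => (m - d) %/ 2)%N (fold_weights m U) = U.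
Proof.
move=> U_le; rewrite -map_comp -[RHS]map_id; apply/eq_in_map => u /(allP U_le) /=.
by lia.
Qed.

Lemma prod_rep_lik_inj m U V :
  all (fun u => 2 * u <= m)%N U -> all (fun u => 2 * u <= m)%N V -> size U = size V ->
  \prod_(u <- U) rep_lik m u = \prod_(v <- V) rep_lik m v -> perm_eq U V.
Proof.
move=> U_le V_le sizeUV eqUV.
have coef0_neq0 W : (prod_1DXn (fold_weights m W))`_0 != 0.
  by rewrite coef0_prod_1DXn pnatr_eq0 expn_eq0.
have : prod_1DXn (fold_weights m U) = prod_1DXn (fold_weights m V).
  apply: (mulXn_cancel (coef0_neq0 U) (coef0_neq0 V)); apply: poly_natr_eq => i.
  have i1 : 1 + i%:R != 0 :> R by rewrite -(natrD _ 1) pnatr_eq0.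
  have := congr1 (horner^~ (i%:R / (1 + i%:R))) eqUV.
  rewrite !horner_prod_rep_lik // sizeUV; apply: mulfI.
  by rewrite expf_neq0 // invr_eq0.
move/prod_1DXn_inj/(perm_map (fun d => (m - d) %/ 2)%N).
by rewrite !fold_weightsK.
Qed.

Lemma prod_rep_lik_sorted_inj m h a (tu1 tu2 : a.-tuple 'I_h.+1) : (2 * h <= m)%N ->
  sorted leq (map val tu1) -> sorted leq (map val tu2) ->
  \prod_(u <- map val tu1) rep_lik m u = \prod_(u <- map val tu2) rep_lik m u -> tu1 = tu2.
Proof.
move=> hm sorted1 sorted2 eq12.
have tuple_le (tu : a.-tuple 'I_h.+1) : all (fun u => 2 * u <= m)%N (map val tu).
  by apply/allP => _ /mapP[u _ ->] /=; have := ltn_ord u; lia.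
have := prod_rep_lik_inj (tuple_le tu1) (tuple_le tu2) _ eq12.
rewrite !size_map !size_tuple => /(_ erefl) /(sorted_eq leq_trans anti_leq sorted1 sorted2).
by move/(inj_map val_inj)/val_inj.
Qed.

(* The witness sorts the folded weights [minn (w t) (m - w t)], see [rep_likC]. *)
Lemma prod_rep_lik_fold m h a (w : 'I_a -> nat) : m = (2 * h)%N -> (forall t, w t <= m)%N ->
  exists2 tu : a.-tuple 'I_h.+1, sorted leq (map val tu) &
    \prod_t rep_lik m (w t) = \prod_(u <- map val tu) rep_lik m u.
Proof.
move=> m_eq w_le; pose u t := minn (w t) (m - w t).
have u_lt t : (u t < h.+1)%N by have := w_le t; rewrite /u; lia.
pose tu := map_tuple (fun t => inord (u t) : 'I_h.+1) (ord_tuple a).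
exists (sort_tuple (relpre val leq) tu).
  by rewrite /= sorted_map; apply: sort_sorted => x y; apply: leq_total.
rewrite big_map (perm_big _ (permEl (perm_sort _ _))) /= big_map big_enum /=.
apply: eq_bigr => t _; rewrite inordK // /u.
by case: leqP => // _; rewrite rep_likC.
Qed.

End RepetitionLikelihood.

Arguments rep_lik {R} m u.

Lemma leq_exp2_addl s k : (2 ^ k <= 2 ^ (s + k))%N.
Proof. by rewrite leq_exp2l // leq_addl. Qed.

Fixpoint digits_le (n r j : nat) : bool :=
  if n is n'.+1 then
    (j %/ 2 ^ n' <= r %/ 2 ^ n')%N && digits_le n' (r %% 2 ^ n') (j %% 2 ^ n')
  else true.

Lemma Gpolar_digits_le n (r j : 'I_(2 ^ n)) : Gpolar n r j = (digits_le n r j)%:R.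
Proof.
elim: n r j => [|n IH] r j /=.
  by rewrite mxE; move: r j; rewrite expn0 => r j; rewrite !ord1 eqxx.
rewrite castmxE /= mxE /Fker mxE IH /=.
by case: (_ <= _)%N; rewrite ?mul1r ?mul0r.
Qed.

Lemma digits_lexx n r : digits_le n r r.
Proof. by elim: n r => [|n IH] r //=; rewrite leqnn IH. Qed.

Lemma digits_le_leq n r j : (j < 2 ^ n)%N -> digits_le n r j -> (j <= r)%N.
Proof.
elim: n r j => [|n IH] r j /=; first by rewrite expn0 ltnS leqn0 => /eqP ->.
move=> _ /andP[le_div /(IH _ _ (ltn_pmod _ (expn_gt0 2 n))) le_mod].
rewrite (divn_eq j (2 ^ n)) (divn_eq r (2 ^ n)).
have : (j %/ 2 ^ n * 2 ^ n <= r %/ 2 ^ n * 2 ^ n)%N by rewrite leq_mul2r le_div orbT.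
by lia.
Qed.

(* The last [2^k] rows have all their top [s] binary digits equal to 1. *)
Lemma digits_le_last_rows s k r j : (r < 2 ^ k)%N -> (j < 2 ^ (s + k))%N ->
  digits_le (s + k) (2 ^ (s + k) - 2 ^ k + r) j = digits_le k r (j %% 2 ^ k).
Proof.
move=> r_lt; elim: s j => [|s IH] j j_lt; first by rewrite add0n subnn add0n modn_small.
rewrite addSn /=; set P := (2 ^ (s + k))%N; set K := (2 ^ k)%N.
have K_le_P : (K <= P)%N := leq_exp2_addl s k.
have K_dvd_P : (K %| P)%N by rewrite dvdn_exp2l // leq_addl.
have P_gt0 : (0 < P)%N by rewrite expn_gt0.
have -> : (2 ^ (s + k).+1 - K + r = 1 * P + (P - K + r))%N by rewrite expnS -/P; lia.
have lt_P : (P - K + r < P)%N by lia.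
rewrite divnMDl // modnMDl (divn_small lt_P) (modn_small lt_P) addn0.
have -> : (j %/ P <= 1)%N.
  by rewrite -ltnS ltn_divLR //; move: j_lt; rewrite addSn expnS -/P; lia.
by rewrite IH ?ltn_pmod // modn_dvdm.
Qed.

Lemma Gpolar_unitmx k : Gpolar k \in unitmx.
Proof.
rewrite unitmxE det_trig.
  by rewrite big1 ?unitr1 // => i _; rewrite Gpolar_digits_le digits_lexx.
apply/is_trig_mxP => i j lt_ij; rewrite Gpolar_digits_le.
by case le_ij: (digits_le k i j); rewrite // ltnNge (digits_le_leq _ le_ij) in lt_ij.
Qed.

Definition residue k N (j : 'I_N) : 'I_(2 ^ k) := Ordinal (ltn_pmod j (expn_gt0 2 k)).

Definition tile_mx (R : pzRingType) s k : 'M[R]_(2 ^ k, 2 ^ (s + k)) :=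
  \matrix_(t, j) (residue k j == t)%:R.

Lemma mul_tile_mx (R : pzRingType) s k (v : 'rV[R]_(2 ^ k)) :
  v *m tile_mx R s k = \row_j v 0 (residue k j).
Proof.
apply/rowP => j; rewrite !mxE (bigD1 (residue k j)) //= mxE eqxx mulr1 big1 ?addr0 //.
by move=> t t_neq; rewrite mxE eq_sym (negbTE t_neq) mulr0.
Qed.

Lemma Asub_last_rows s k :
  Asub (s + k) (2 ^ (s + k) - 2 ^ k) =
  castmx (esym (subKn (leq_exp2_addl s k)), erefl) (Gpolar k *m tile_mx _ s k).
Proof.
apply/matrixP => r j; rewrite castmxE !mxE Gpolar_digits_le /=.
rewrite (bigD1 (residue k j)) //= mxE eqxx mulr1 big1 ?addr0; last first.
  by move=> t t_neq; rewrite mxE eq_sym (negbTE t_neq) mulr0.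
rewrite Gpolar_digits_le /= digits_le_last_rows //.
by have := ltn_ord r; move: (nat_of_ord r) => x; rewrite subKn ?leq_exp2_addl.
Qed.

Lemma tile_mx_inj s k : injective (fun v : 'rV['F_2]_(2 ^ k) => v *m tile_mx _ s k).
Proof.
move=> v1 v2 /= /rowP eq_v; apply/rowP => t.
have t_lt : (t < 2 ^ (s + k))%N := leq_trans (ltn_ord t) (leq_exp2_addl s k).
have residue_t : residue k (Ordinal t_lt) = t by apply: val_inj; rewrite /= modn_small.
by have := eq_v (Ordinal t_lt); rewrite !mul_tile_mx !mxE residue_t.
Qed.

Lemma sum_Asub_last_rows (V : nmodType) s k (F : 'rV['F_2]_(2 ^ (s + k)) -> V) :
  \sum_(c | (c <= Asub (s + k) (2 ^ (s + k) - 2 ^ k))%MS) F c =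
  \sum_(v : 'rV['F_2]_(2 ^ k)) F (v *m tile_mx _ s k).
Proof.
have row_spaceE (c : 'rV['F_2]_(2 ^ (s + k))) : (c <= Asub (s + k) (2 ^ (s + k) - 2 ^ k))%MS =
    (c \in [set v *m tile_mx _ s k | v in setT]).
  rewrite Asub_last_rows eqmx_cast eqmxMfull ?row_full_unit ?Gpolar_unitmx //.
  by apply/submxP/imsetP => [[v ->]|[v _ ->]]; exists v.
rewrite (eq_bigl _ _ row_spaceE) big_imset /=; last by move=> v1 v2 _ _; apply: tile_mx_inj.
by apply: eq_bigl => v; rewrite in_setT.
Qed.

Lemma tile_idx_proof s k (b : 'I_(2 ^ s)) (t : 'I_(2 ^ k)) : (b * 2 ^ k + t < 2 ^ (s + k))%N.
Proof. by rewrite expnD; exact: (mxtens_index_proof (b, t)). Qed.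

Definition tile_idx s k b t : 'I_(2 ^ (s + k)) := Ordinal (@tile_idx_proof s k b t).

Lemma residue_tile_idx s k b t : residue k (@tile_idx s k b t) = t.
Proof. by apply: val_inj => /=; rewrite modnMDl modn_small. Qed.

Lemma big_tile_idx (V : Type) (idx : V) (op : Monoid.com_law idx) s k
    (F : 'I_(2 ^ (s + k)) -> V) :
  \big[op/idx]_j F j = \big[op/idx]_(t < 2 ^ k) \big[op/idx]_(b < 2 ^ s) F (tile_idx b t).
Proof.
have quo_lt (j : 'I_(2 ^ (s + k))) : (j %/ 2 ^ k < 2 ^ s)%N.
  by rewrite ltn_divLR ?expn_gt0 // -expnD.
rewrite pair_big (reindex (fun p : 'I_(2 ^ k) * 'I_(2 ^ s) => tile_idx p.2 p.1)) //=.
exists (fun j => (residue k j, Ordinal (quo_lt j))) => [[t b] _|j _] /=.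
  congr (_, _); apply: val_inj; rewrite /= ?modnMDl ?modn_small //.
  by rewrite divnMDl ?expn_gt0 // divn_small // addn0.
by apply: val_inj; rewrite /= -divn_eq.
Qed.

Lemma sum_prod_row (R : comPzSemiRingType) (T : finType) n (G : 'I_n -> T -> R) :
  \sum_(v : 'rV[T]_n) \prod_i G i (v 0 i) = \prod_i \sum_x G i x.
Proof.
rewrite bigA_distr_bigA (reindex (fun f : {ffun 'I_n -> T} => \row_i f i)) /=.
  by apply: eq_bigr => f _; apply: eq_bigr => i _; rewrite mxE.
exists (fun v : 'rV_n => [ffun i => v 0 i]) => [f _|v _].
  by apply/ffunP => i; rewrite ffunE mxE.
by apply/rowP => i; rewrite !mxE ffunE.
Qed.

Lemma F2_eq01 (x : 'F_2) : x = 0 \/ x = 1.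
Proof. by case: x => [[|[|//]]] x_lt; [left|right]; apply: val_inj. Qed.

Lemma sum_F2 (V : nmodType) (f : 'F_2 -> V) : \sum_(x : 'F_2) f x = f 0 + f 1.
Proof.
rewrite (bigD1 0) //= (bigD1 1) //= big1 ?addr0 // => x /andP[x_neq1 x_neq0].
by case: (F2_eq01 x) x_neq1 x_neq0 => ->; rewrite eqxx.
Qed.

Lemma prod_Wbsc (T : finType) (f : T -> 'F_2) x :
  \prod_b Wbsc (f b) x = (1 - 'X) ^+ #|[pred b | f b == x]| * 'X ^+ #|[pred b | f b != x]|.
Proof.
rewrite (bigID (fun b => f b == x)) /= -!prodr_const.
congr (_ * _); apply: eq_big => // b; rewrite ?inE /Wbsc; first by move=> ->.
by move/negbTE ->.
Qed.

Lemma sum_prod_Wbsc (T : finType) (f : T -> 'F_2) :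
  \sum_(x : 'F_2) \prod_b Wbsc (f b) x = rep_lik #|T| #|[pred b | f b == 1]|.
Proof.
have card_neq1 : #|[pred b | f b != 1]| = subn #|T| #|[pred b | f b == 1]|.
  by rewrite -(cardC [pred b | f b == 1]) addKn; apply: eq_card => b; rewrite !inE.
have card_eq0 : #|[pred b | f b == 0]| = #|[pred b | f b != 1]|.
  by apply: eq_card => b; rewrite !inE; case: (F2_eq01 (f b)) => ->.
have card_neq0 : #|[pred b | f b != 0]| = #|[pred b | f b == 1]|.
  by apply: eq_card => b; rewrite !inE; case: (F2_eq01 (f b)) => ->.
by rewrite sum_F2 !prod_Wbsc card_eq0 card_neq0 card_neq1 /rep_lik [X in _ + X]mulrC.
Qed.

Definition coset_weight s k (y : 'rV['F_2]_(2 ^ (s + k))) (t : 'I_(2 ^ k)) : nat :=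
  #|[pred b : 'I_(2 ^ s) | y 0 (tile_idx b t) == 1]|.

Lemma sum_WN_Asub_last_rows s k (y : 'rV['F_2]_(2 ^ (s + k))) :
  \sum_(c | (c <= Asub (s + k) (2 ^ (s + k) - 2 ^ k))%MS) WN y c =
  \prod_(t < 2 ^ k) rep_lik (2 ^ s) (coset_weight y t).
Proof.
rewrite sum_Asub_last_rows.
transitivity (\sum_(v : 'rV_(2 ^ k))
    \prod_t \prod_(b < 2 ^ s) Wbsc (y 0 (tile_idx b t)) (v 0 t)).
  apply: eq_bigr => v _; rewrite /WN big_tile_idx.
  by apply: eq_bigr => t _; apply: eq_bigr => b _; rewrite mul_tile_mx mxE residue_tile_idx.
rewrite (sum_prod_row (fun t x => \prod_(b < 2 ^ s) Wbsc (y 0 (tile_idx b t)) x)).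
by apply: eq_bigr => t _; rewrite sum_prod_Wbsc card_ord.
Qed.

Lemma coset_weight_le s k y t : (@coset_weight s k y t <= 2 ^ s)%N.
Proof. by apply: leq_trans (max_card _) _; rewrite card_ord. Qed.

Lemma card_ord_lt m c : (c <= m)%N -> #|[pred b : 'I_m | (b < c)%N]| = c.
Proof.
move=> le_cm; rewrite -sum1_card (eq_bigl (fun b : 'I_m => true && (b < c)%N)) //.
by rewrite (big_ord_narrow_cond le_cm) sum1_card card_ord.
Qed.

Lemma coset_weight_onto s k (f : 'I_(2 ^ k) -> nat) : (forall t, f t <= 2 ^ s)%N ->
  exists y : 'rV['F_2]_(2 ^ (s + k)), forall t, coset_weight y t = f t.
Proof.
move=> f_le; exists (\row_j if (j %/ 2 ^ k < f (residue k j))%N then 1 else 0) => t.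
rewrite -[RHS](card_ord_lt (f_le t)); apply: eq_card => b.
rewrite !inE mxE residue_tile_idx /= divnMDl ?expn_gt0 // divn_small // addn0.
by case: (_ < _)%N.
Qed.

Lemma size_undup_map_factor (T S : finType) (V : eqType) (f : T -> V) (g : S -> V)
    (A : {set S}) :
  {in A &, injective g} -> (forall x, exists2 s, s \in A & f x = g s) ->
  (forall s, s \in A -> exists x, f x = g s) ->
  size (undup [seq f x | x <- enum T]) = #|A|.
Proof.
move=> g_inj f_in g_onto; rewrite cardE -(size_map g).
apply/perm_size/uniq_perm; rewrite ?undup_uniq ?map_inj_in_uniq ?enum_uniq //.
  by move=> s1 s2; rewrite !mem_enum; apply: g_inj.
move=> v; rewrite mem_undup; apply/mapP/mapP => [[x _ ->]|[s]].
  by have [s sA ->] := f_in x; exists s; rewrite ?mem_enum.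
by rewrite mem_enum => /g_onto [x <-] ->; exists x; rewrite ?mem_enum.
Qed.

Lemma nc_last_rows s k :
  nc (s.+1 + k) (2 ^ (s.+1 + k) - 2 ^ k) = 'C(2 ^ k + 2 ^ s, 2 ^ k).
Proof.
set m := (2 ^ s.+1)%N; have m_eq : m = (2 * 2 ^ s)%N by rewrite /m expnS.
pose K : rat := (2 ^ (2 ^ (s.+1 + k) - 1))%:R^-1.
have K_neq0 : K != 0 by rewrite invr_eq0 pnatr_eq0 expn_eq0.
pose g (tu : (2 ^ k).-tuple 'I_(2 ^ s).+1) := K *: \prod_(u <- map val tu) rep_lik m u.
rewrite /nc -card_sorted_tuples; apply: (size_undup_map_factor (g := g)).
- move=> tu1 tu2; rewrite !inE => sorted1 sorted2 /(scalerI K_neq0).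
  by apply: prod_rep_lik_sorted_inj; rewrite // -m_eq.
- move=> y; have [tu sorted_tu eq_tu] :=
    prod_rep_lik_fold rat m_eq (@coset_weight_le _ _ y).
  by exists tu; rewrite ?inE // /Wsplit sum_WN_Asub_last_rows eq_tu.
- move=> tu _; have [|y weight_y] := @coset_weight_onto s.+1 k (fun t => tnth tu t).
    by move=> t; have := ltn_ord (tnth tu t); rewrite -/m m_eq; lia.
  exists y; rewrite /Wsplit sum_WN_Asub_last_rows /g big_map big_tuple.
  by congr (_ *: _); apply: eq_bigr => t _; rewrite weight_y.
Qed.

Local Close Scope ring_scope.

Theorem corollary6 (n a : nat) :
  (exists k : nat, a = 2 ^ k) ->
  a <= 2 ^ n %/ 2 ->
  nc n (2 ^ n - a) = 'C(a + 2 ^ n %/ (2 * a), 2 ^ n %/ (2 * a)).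
Proof.
move=> [k ->] a_le.
have lt_kn : k < n.
  rewrite -(ltn_exp2l _ _ (ltnSn 1)); apply: leq_ltn_trans a_le _.
  by rewrite ltn_Pdiv // expn_gt0.
have -> : n = (n - k.+1).+1 + k by lia.
set s := n - k.+1.
have -> : 2 ^ (s.+1 + k) %/ (2 * 2 ^ k) = 2 ^ s.
  by rewrite expnD expnS -mulnA mulnCA mulnK // muln_gt0 expn_gt0.
by rewrite nc_last_rows -{3}(addKn (2 ^ k) (2 ^ s)) bin_sub // leq_addr.
Qed.
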